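(* Let $n_0$ be a positive integer satisfying: 1. every subgroup of index a power of two of any insolvable group of order $n_0$ is insolvable; 2. there is no non-abelian simple group of order $2^r\cdot n_0$ for any integer $r\ge1$; 3. if $n_0$ is even, then $n_0/2$ is a solvable number; 4. for every odd prime $p$ dividing $n_0$ and every integer $r\ge0$, the number $(2^r\cdot n_0)/p$ is solvable. Then for every integer $r\ge0$: (i) every subgroup of index a power of two of any insolvable group of order $2^r\cdot n_0$ is insolvable; (ii) every insolvable group of order $2^r\cdot n_0$ has a non-abelian composition factor of order $n_0$.
   Context: A positive integer $n$ is called solvable if every group of order $n$ is solvable. *)

From mathcomp Require Import all_boot all_fingroup all_solvable.
Set Implicit Arguments. Unset Strict Implicit. Unset Printing Implicit Defensive.
Local Open Scope group_scope.

Definition solvable_number (n : nat) : Prop :=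
  forall (gT : finGroupType) (G : {group gT}), #|G| = n -> solvable G.

Definition pow2_index_insolvable (n : nat) : Prop :=
  forall (gT : finGroupType) (G H : {group gT}),
    #|G| = n -> ~~ solvable G -> H \subset G ->
    (exists k, #|G : H| = (2 ^ k)%N) -> ~~ solvable H.

Definition exists_nonabelian_simple (m : nat) : Prop :=
  exists (gT : finGroupType) (G : {group gT}),
    [/\ #|G| = m, simple G & ~~ abelian G].

(* G has a non-abelian composition factor of order m: for some composition
   series G = G_0 > G_1 > ... > G_k = 1 (mathcomp's [comps]), some factor
   G_i / G_{i+1} is non-abelian of order m. *)
Definition has_nonabelian_comp_factor (gT : finGroupType) (G : {group gT})
    (m : nat) : Prop :=
  exists s : seq {group gT}, comps G s /\
    exists2 i, i < size s &
      let A := nth G (G :: s) i in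
      let B := nth G s i in
      ~~ abelian (A / B) /\ #|A / B| = m.

(* Let N be a maximal normal subgroup of an insolvable group G of order
   2^r n0.  If G/N is solvable it has prime order p: an odd p would make N
   an insolvable group of the solvable order 2^r n0 / p, so p = 2, r > 0
   (otherwise #|N| = n0 / 2) and N is insolvable of order 2^(r-1) n0.  If
   G/N is non-abelian simple, an odd prime p dividing #|N| would make #|G/N|
   divide the solvable number 2^r n0 / p, so N is a 2-group; then #|G/N| is
   n0, or 2^t n0 with t >= 1 (excluded by hypothesis 2), or a divisor of
   n0 / 2 (excluded by hypothesis 3).  Both claims follow by induction on r:
   a subgroup H of 2-power index in G yields the subgroups N :&: H of N and
   H/N of G/N, again of 2-power index, and a composition series of N
   extends to one of G. *)

From mathcomp Require Import all_boot all_fingroup all_solvable zmodp.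

Set Implicit Arguments.
Unset Strict Implicit.

Lemma solvable_number_dvd m d :
  solvable_number m -> 0 < m -> d %| m -> solvable_number d.
Proof.
move=> solm m_gt0 dvd_dm gT K cardK.
have d_gt0 : 0 < d by rewrite -cardK cardG_gt0.
have cofactor_gt0 : 0 < m %/ d by rewrite divn_gt0 // dvdn_leq.
pose Z := Zp (m %/ d).
have cardKZ : #|setX K Z| = m by rewrite cardsX card_Zp // cardK mulnC divnK.
rewrite (isog_sol (isog_setX1 'Z_(m %/ d) K)).
exact: solvableS (setXS (subxx K) (sub1G Z)) (solm _ (setX_group K Z) cardKZ).
Qed.

Lemma dvdn_pow2 d k : d %| 2 ^ k -> exists k', d = 2 ^ k'.
Proof. by case/(@dvdn_pfactor 2 _ _ isT)=> k' _ ->; exists k'. Qed.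

Local Open Scope group_scope.

Lemma index_quotient_mul_normalI (gT : finGroupType) (G N H : {group gT}) :
  N <| G -> H \subset G -> (#|G / N : H / N| * #|N : N :&: H|)%N = #|G : H|.
Proof.
move=> /andP[sNG nNG] sHG.
by have := index_quotient_ker sHG nNG; rewrite (setIidPr sNG) indexgI.
Qed.

Lemma comps_cons (gT : finGroupType) (G N : {group gT}) s :
  maxnormal N G G -> comps N s -> comps G (N :: s).
Proof.
by move=> maxN /compsP[last_s path_s]; apply/compsP; rewrite /= maxN.
Qed.

Lemma has_nonabelian_comp_factor_maxnormal
    (gT : finGroupType) (G N : {group gT}) m :
  maxnormal N G G -> has_nonabelian_comp_factor N m ->
  has_nonabelian_comp_factor G m.
Proof.
move=> maxN [s [comps_s [i lt_i_s factor_i]]].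
exists (N :: s); split; first exact: comps_cons.
exists i.+1 => //=.
have lt_i_Ns : i < size (N :: s) := ltnW lt_i_s.
by rewrite (set_nth_default N G lt_i_s) (set_nth_default N G lt_i_Ns).
Qed.

Lemma has_nonabelian_comp_factor_quotient
    (gT : finGroupType) (G N : {group gT}) m :
  maxnormal N G G -> ~~ abelian (G / N) -> #|G / N| = m ->
  has_nonabelian_comp_factor G m.
Proof.
move=> maxN nabGN cardGN; have [s comps_s] := exists_comps N.
by exists (N :: s); split; [exact: comps_cons | exists 0].
Qed.

Section PowerOfTwoMultiples.

Variable n0 : nat.
Hypothesis n0_gt0 : 0 < n0.
Hypothesis pow2_index_insolvable_n0 : pow2_index_insolvable n0.
Hypothesis no_simple_2powM :
  forall r, 1 <= r -> ~ exists_nonabelian_simple (2 ^ r * n0)%N.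
Hypothesis solvable_half_n0 : ~~ odd n0 -> solvable_number (n0 %/ 2).
Hypothesis solvable_2powM_divn_odd_prime : forall p r,
  prime p -> odd p -> p %| n0 -> solvable_number ((2 ^ r * n0)%N %/ p).

Lemma solvable_number_odd_prime_cofactor p r d :
  prime p -> odd p -> p * d %| (2 ^ r * n0)%N -> solvable_number d.
Proof.
move=> p_pr p_odd dvd_pd.
have dvd_p : p %| (2 ^ r * n0)%N := dvdn_trans (dvdn_mulr d (dvdnn p)) dvd_pd.
have dvd_p_n0 : p %| n0.
  by rewrite -(@Gauss_dvdr _ (2 ^ r)) // coprimeXr // coprimen2.
have := solvable_2powM_divn_odd_prime (r := r) p_pr p_odd dvd_p_n0.
move/solvable_number_dvd; apply.
  by rewrite divn_gt0 ?prime_gt0 // dvdn_leq // muln_gt0 expn_gt0.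
by rewrite dvdn_divRL // mulnC.
Qed.

Lemma solvable_number_half_cofactor d : 2 * d %| n0 -> solvable_number d.
Proof.
move=> dvd_2d.
have dvd_2 : 2 %| n0 := dvdn_trans (dvdn_mulr d (dvdnn 2)) dvd_2d.
have n0_even : ~~ odd n0 by rewrite -dvdn2.
apply: (solvable_number_dvd (solvable_half_n0 n0_even)).
  by rewrite divn_gt0 // dvdn_leq.
by rewrite dvdn_divRL // mulnC.
Qed.

Section NormalSubgroup.

Variables (gT : finGroupType) (G N : {group gT}) (r : nat).
Hypotheses (nsNG : N <| G) (cardG : #|G| = (2 ^ r * n0)%N).

Let cardN_mul_quotient : (#|N| * #|G / N|)%N = (2 ^ r * n0)%N.
Proof. by rewrite card_quotient ?normal_norm // Lagrange ?normal_sub. Qed.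

Lemma card_insolvable_normal_prime_quotient :
  prime #|G / N| -> ~~ solvable N ->
  exists2 r', r = r'.+1 & #|N| = (2 ^ r' * n0)%N.
Proof.
move=> GN_pr nsolN.
have [GN_2 | GN_odd] := even_prime GN_pr; last first.
  case/negP: nsolN.
  apply: (solvable_number_odd_prime_cofactor (r := r) GN_pr GN_odd _
           (erefl #|N|)).
  by rewrite mulnC cardN_mul_quotient.
have cardN2 := cardN_mul_quotient; rewrite GN_2 in cardN2.
have [r0 | r_gt0] := posnP r.
  case/negP: nsolN; apply: (solvable_number_half_cofactor _ (erefl #|N|)).
  by rewrite mulnC cardN2 r0 mul1n.
exists r.-1; first by rewrite prednK.
apply/eqP; rewrite -(eqn_pmul2r (isT : 0 < 2)) cardN2.
by rewrite mulnAC -expnSr prednK.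
Qed.

Lemma card_insolvable_simple_quotient :
  simple (G / N) -> ~~ solvable (G / N) -> #|G / N| = n0.
Proof.
move=> simGN nsolGN.
have N_2group : 2.-nat #|N|.
  apply/pnatP=> // p p_pr dvd_p_N; rewrite inE.
  apply: contraNT nsolGN => p_ne2.
  have p_odd : odd p by case: (even_prime p_pr) p_ne2 => [->|].
  apply: (solvable_number_odd_prime_cofactor (r := r) p_pr p_odd _
           (erefl #|G / N|)).
  by rewrite -cardN_mul_quotient dvdn_mul.
have [s cardN] : exists s, #|N| = (2 ^ s)%N.
  by exists (logn 2 #|N|); rewrite -p_part part_pnat_id.
have := cardN_mul_quotient; rewrite cardN.
have [le_sr | lt_rs] := leqP s r.
  rewrite -(subnKC le_sr) expnD -mulnA => /eqP.
  rewrite eqn_pmul2l ?expn_gt0 // => /eqP cardGN.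
  have [rs0 | rs_gt0] := posnP (r - s); first by rewrite cardGN rs0 mul1n.
  case: (no_simple_2powM rs_gt0); exists _, (G / N)%G; split=> //.
  by apply: contra nsolGN; apply: abelian_sol.
rewrite -(subnKC (ltnW lt_rs)) expnD -mulnA => /eqP.
rewrite eqn_pmul2l ?expn_gt0 // => /eqP cardGN.
case/negP: nsolGN.
apply: (solvable_number_half_cofactor _ (erefl #|G / N|)).
by rewrite -cardGN dvdn_mul // (@dvdn_exp2l 2 1) ?subn_gt0.
Qed.

End NormalSubgroup.

Lemma insolvable_maxnormal_cases (gT : finGroupType) (G : {group gT}) r :
  #|G| = (2 ^ r * n0)%N -> ~~ solvable G ->
  exists2 N : {group gT}, maxnormal N G G &
    (exists2 r', r = r'.+1 & #|N| = (2 ^ r' * n0)%N /\ ~~ solvable N)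
    \/ (#|G / N| = n0 /\ ~~ solvable (G / N)).
Proof.
move=> cardG nsolG.
have ntG : G :!=: 1 by apply: contraNneq nsolG => ->; apply: solvable1.
have [N maxN] := ex_maxnormal_ntrivg ntG.
have nsNG := maxnormal_normal maxN.
have simGN : simple (G / N) by rewrite quotient_simple.
exists N => //.
have [solGN | nsolGN] := boolP (solvable (G / N)); [left | right].
  have nsolN : ~~ solvable N.
    by apply: contra nsolG; rewrite (series_sol nsNG) solGN andbT.
  have GN_pr := simple_sol_prime solGN simGN.
  have [r' r_eq cardN] :=
    card_insolvable_normal_prime_quotient nsNG cardG GN_pr nsolN.
  by exists r'.
by rewrite (card_insolvable_simple_quotient nsNG cardG).
Qed.

Lemma pow2_index_insolvable_2powM r : pow2_index_insolvable (2 ^ r * n0)%N.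
Proof.
elim/ltn_ind: r => r IHr gT G H cardG nsolG sHG [k idxH].
have [N maxN cases] := insolvable_maxnormal_cases cardG nsolG.
have nsNG := maxnormal_normal maxN.
have idx_mul := index_quotient_mul_normalI nsNG sHG; rewrite idxH in idx_mul.
case: cases => [[r' r_eq [cardN nsolN]] | [cardGN nsolGN]].
  have [k' idxNH] : exists k', #|N : N :&: H| = (2 ^ k')%N.
    by apply: (dvdn_pow2 (k := k)); rewrite -idx_mul dvdn_mull.
  have lt_r'r : r' < r by rewrite r_eq.
  have := IHr r' lt_r'r _ N (N :&: H)%G cardN nsolN (subsetIl _ _)
            (ex_intro _ k' idxNH).
  by apply: contra; apply: solvableS; apply: subsetIr.
have [k' idxGNHN] : exists k', #|G / N : H / N| = (2 ^ k')%N.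
  by apply: (dvdn_pow2 (k := k)); rewrite -idx_mul dvdn_mulr.
have := pow2_index_insolvable_n0 cardGN nsolGN (quotientS _ sHG)
          (ex_intro _ k' idxGNHN).
by apply: contra; apply: quotient_sol.
Qed.

Lemma nonabelian_comp_factor_2powM r (gT : finGroupType) (G : {group gT}) :
  #|G| = (2 ^ r * n0)%N -> ~~ solvable G -> has_nonabelian_comp_factor G n0.
Proof.
elim/ltn_ind: r gT G => r IHr gT G cardG nsolG.
have [N maxN [[r' r_eq [cardN nsolN]] | [cardGN nsolGN]]] :=
  insolvable_maxnormal_cases cardG nsolG.
  have lt_r'r : r' < r by rewrite r_eq.
  have := IHr r' lt_r'r _ N cardN nsolN.
  exact: has_nonabelian_comp_factor_maxnormal maxN.
apply: has_nonabelian_comp_factor_quotient maxN _ cardGN.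
by apply: contra nsolGN; apply: abelian_sol.
Qed.

End PowerOfTwoMultiples.

Theorem lemma5p2 (n0 : nat) :
  0 < n0 ->
  pow2_index_insolvable n0 ->
  (forall r : nat, 1 <= r -> ~ exists_nonabelian_simple (2 ^ r * n0)%N) ->
  (~~ odd n0 -> solvable_number (n0 %/ 2)) ->
  (forall p r : nat, prime p -> odd p -> p %| n0 ->
      solvable_number ((2 ^ r * n0)%N %/ p)) ->
  forall r : nat,
    pow2_index_insolvable (2 ^ r * n0)%N /\
    (forall (gT : finGroupType) (G : {group gT}),
        #|G| = (2 ^ r * n0)%N -> ~~ solvable G ->
        has_nonabelian_comp_factor G n0).
Proof.
move=> n0_gt0 idx_n0 no_simple sol_half sol_cofactor r; split.
  exact: pow2_index_insolvable_2powM.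
exact: nonabelian_comp_factor_2powM.
Qed.
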